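(* Let $\tau$ be a $T_1$-topology on $\mathcal{C}(p,q)$ such that $(\mathcal{C}(p,q),\tau)$ is a semitopological semigroup. If there exists a point $q^ip^j\in\mathcal{C}(p,q)$ such that the subspace $\updownarrow_{\preceq}q^ip^j$ is quasi-regular at $q^ip^j$, then for every point $q^mp^n\in\mathcal{C}(p,q)$ the subspace $\updownarrow_{\preceq}q^mp^n$ is quasi-regular at $q^mp^n$.
   Context: The bicyclic monoid $\mathcal{C}(p,q)$ is the monoid generated by $p,q$ subject only to $pq=1$; elements are uniquely $q^ip^j$, $i,j\in\omega$, with multiplication $q^kp^l\cdot q^mp^n = q^{k-l+m}p^n$ if $l<m$, $=q^kp^n$ if $l=m$, $=q^kp^{l-m+n}$ if $l>m$. Natural partial order: $q^ip^j\preceq q^sp^t$ iff $i\ge s$ and $i-j=s-t$; $\updownarrow_{\preceq}x=\{y:x\preceq y\}\cup\{y:y\preceq x\}$. Semitopological semigroup: multiplication separately continuous. A subspace $Y$ is quasi-regular at $x\in Y$ if for every open neighbourhood $U$ of $x$ in $Y$ there is a nonempty open $V\subseteq Y$ with $\mathrm{cl}_Y(V)\subseteq U$. *)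

From Stdlib Require Import Arith.

(* The element q^i p^j of the bicyclic monoid C(p,q) is encoded as (i, j). *)
Definition bicyclic : Type := (nat * nat)%type.

Definition bmul (x y : bicyclic) : bicyclic :=
  let '(k, l) := x in let '(m, n) := y in
  if Nat.ltb l m then (k + (m - l), n)
  else if Nat.eqb l m then (k, n)
  else (k, l - m + n).

(* Natural partial order: q^i p^j <= q^s p^t iff i >= s and i - j = s - t. *)
Definition ble (x y : bicyclic) : Prop :=
  let '(i, j) := x in let '(s, t) := y in s <= i /\ i + t = s + j.

Definition updown (x : bicyclic) : bicyclic -> Prop :=
  fun y => ble x y \/ ble y x.

Definition is_topology (open : (bicyclic -> Prop) -> Prop) : Prop :=
  open (fun _ => True) /\
  open (fun _ => False) /\
  (forall (I : Type) (F : I -> bicyclic -> Prop),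
      (forall i, open (F i)) -> open (fun x => exists i, F i x)) /\
  (forall U V, open U -> open V -> open (fun x => U x /\ V x)).

Definition T1 (open : (bicyclic -> Prop) -> Prop) : Prop :=
  forall x y : bicyclic, x <> y -> exists U, open U /\ U x /\ ~ U y.

Definition semitopological (open : (bicyclic -> Prop) -> Prop) : Prop :=
  forall a : bicyclic, forall U, open U ->
    open (fun x => U (bmul a x)) /\ open (fun x => U (bmul x a)).

Definition sub_open (open : (bicyclic -> Prop) -> Prop) (Y U : bicyclic -> Prop)
  : Prop :=
  (forall y, U y -> Y y) /\ exists W, open W /\ forall y, U y <-> (W y /\ Y y).

Definition sub_closure (open : (bicyclic -> Prop) -> Prop) (Y V : bicyclic -> Prop)
  : bicyclic -> Prop :=
  fun y => Y y /\ forall W, sub_open open Y W -> W y -> exists z, W z /\ V z.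

Definition quasi_regular_at (open : (bicyclic -> Prop) -> Prop)
    (Y : bicyclic -> Prop) (x : bicyclic) : Prop :=
  forall U, sub_open open Y U -> U x ->
    exists V, sub_open open Y V /\ (exists v, V v) /\
      (forall y, sub_closure open Y V y -> U y).

From Stdlib Require Import Arith Lia Classical FunctionalExtensionality PropExtensionality.

(* Every chain [updown x] is a line {(a, b) | a - b = d}.  On a line the maps
   x |-> q x p and x |-> p x q are continuous and mutually inverse away from the
   greatest element, and left (right) multiplication by q and p identifies
   consecutive lines.  Quasi-regularity is invariant under such local
   homeomorphisms of subspaces, so it passes from any point to the identity
   (0, 0) and from there to every point.  The one step that is not a local
   homeomorphism goes from the greatest element e of a line to q e p, both of
   which x |-> p x q sends to e: there quasi-regularity at e is used twice, once
   to find an open set whose closure avoids e or, failing that, to separate e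
   from q e p, and once more inside the separating neighbourhood. *)

Lemma pred_ext (A B : bicyclic -> Prop) : (forall x, A x <-> B x) -> A = B.
Proof.
  intro H. apply functional_extensionality; intro x.
  apply propositional_extensionality, H.
Qed.

Section Subspace.

Variable open : (bicyclic -> Prop) -> Prop.

Definition continuous (h : bicyclic -> bicyclic) : Prop :=
  forall W, open W -> open (fun x => W (h x)).

Lemma continuous_comp (f g : bicyclic -> bicyclic) :
  continuous f -> continuous g -> continuous (fun x => f (g x)).
Proof. intros Hf Hg W HW. exact (Hg _ (Hf W HW)). Qed.

(* [closure_in Y V] is the closure in [Y] of the trace [Y ∩ V]; [quasi_regular_in]
   is [quasi_regular_at] with every open set of the subspace [Y] written as the
   trace of an open set of the whole space. *)
Definition closure_in (Y V : bicyclic -> Prop) (y : bicyclic) : Prop :=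
  Y y /\ forall W, open W -> W y -> exists z, Y z /\ W z /\ V z.

Definition quasi_regular_in (Y : bicyclic -> Prop) (x : bicyclic) : Prop :=
  forall U, open U -> U x ->
    exists V, open V /\ (exists v, Y v /\ V v) /\ forall y, closure_in Y V y -> U y.

Lemma sub_open_trace (Y W : bicyclic -> Prop) :
  open W -> sub_open open Y (fun y => Y y /\ W y).
Proof. intro HW. split; [tauto | exists W; split; [exact HW | tauto]]. Qed.

Lemma quasi_regular_atE (Y : bicyclic -> Prop) (x : bicyclic) :
  Y x -> quasi_regular_at open Y x <-> quasi_regular_in Y x.
Proof.
  intro Yx; split.
  - intros HQ U HU Ux.
    destruct (HQ _ (sub_open_trace Y U HU) (conj Yx Ux))
      as [V [[_ [W [HW HVW]]] [[v Vv] Hcl]]].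
    exists W; split; [exact HW | split].
    + exists v. apply HVW in Vv. tauto.
    + intros y [Yy Hy]. apply Hcl. split; [exact Yy |].
      intros W' [_ [W'' [HW'' HW']]] W'y. apply HW' in W'y.
      destruct (Hy W'' HW'' (proj1 W'y)) as [z [Yz [W''z Wz]]].
      exists z. rewrite HW', HVW. tauto.
  - intros HQ U' [_ [U [HU HU']]] U'x. apply HU' in U'x.
    destruct (HQ U HU (proj1 U'x)) as [V [HV [[v Vv] Hcl]]].
    exists (fun y => Y y /\ V y). split; [apply sub_open_trace, HV | split].
    + exists v; tauto.
    + intros y [Yy Hy]. apply HU'. split; [| exact Yy]. apply Hcl. split; [exact Yy |].
      intros W HW Wy.
      destruct (Hy _ (sub_open_trace Y W HW) (conj Yy Wy)) as [z [[Yz Wz] [_ Vz]]].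
      exists z; tauto.
Qed.

Lemma closure_in_self (Y V : bicyclic -> Prop) (v : bicyclic) :
  Y v -> V v -> closure_in Y V v.
Proof. intros Yv Vv. split; [exact Yv |]. intros W _ Wv. exists v; auto. Qed.

Lemma closure_in_map (h : bicyclic -> bicyclic) (Y Z S V : bicyclic -> Prop) (z : bicyclic) :
  continuous h -> (forall s, Z s -> Y (h s)) -> (forall s, Z s -> S s -> V (h s)) ->
  closure_in Z S z -> closure_in Y V (h z).
Proof.
  intros Hh HZY HSV [Zz Hz]. split; [auto |].
  intros W HW Whz. destruct (Hz _ (Hh W HW) Whz) as [s [Zs [Ws Ss]]].
  exists (h s); auto.
Qed.

Lemma not_closure_in (Y V : bicyclic -> Prop) (y : bicyclic) :
  Y y -> ~ closure_in Y V y ->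
  exists W, open W /\ W y /\ forall z, Y z -> W z -> ~ V z.
Proof.
  intros Yy Hy. apply NNPP. intro Hn. apply Hy. split; [exact Yy |].
  intros W HW Wy. apply NNPP. intro Hm. apply Hn.
  exists W. repeat split; auto. intros z Yz Wz Vz. apply Hm. exists z; auto.
Qed.

Hypothesis open_topology : is_topology open.

Lemma open_all : open (fun _ => True).
Proof. apply open_topology. Qed.

Lemma open_and (U V : bicyclic -> Prop) : open U -> open V -> open (fun x => U x /\ V x).
Proof. apply open_topology. Qed.

Lemma open_neq : T1 open -> forall c : bicyclic, open (fun y => y <> c).
Proof.
  intros HT1 c. destruct open_topology as [_ [_ [Hunion _]]].
  set (I := {U : bicyclic -> Prop | open U /\ ~ U c}).
  replace (fun y => y <> c) with (fun y => exists i : I, proj1_sig i y).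
  - apply Hunion. intros [U [HU nUc]]; exact HU.
  - apply pred_ext. intro y; split.
    + intros [[U [HU nUc]] Uy] ->. contradiction.
    + intro Hy. destruct (HT1 y c Hy) as [U [HU [Uy nUc]]].
      exists (exist _ U (conj HU nUc)). exact Uy.
Qed.

Lemma quasi_regular_in_transfer (Y Z O : bicyclic -> Prop) (alpha beta : bicyclic -> bicyclic)
    (y0 z0 : bicyclic) :
  continuous alpha -> continuous beta -> open O ->
  (forall z, Z z -> Y (alpha z)) ->
  (forall y, Y y -> O y -> Z (beta y) /\ alpha (beta y) = y) ->
  (forall z, Z z -> O (alpha z) -> beta (alpha z) = z) ->
  O y0 -> beta y0 = z0 -> quasi_regular_in Y y0 -> quasi_regular_in Z z0.
Proof.
  intros Ha Hb HO HZY Hsec Hret Oy0 <- HQ U HU Uy0.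
  destruct (HQ (fun y => O y /\ U (beta y)) (open_and _ _ HO (Hb U HU)) (conj Oy0 Uy0))
    as [V [HV [[v [Yv Vv]] Hcl]]].
  exists (fun z => V (alpha z)). split; [exact (Ha V HV) | split].
  - destruct (Hcl v (closure_in_self Y V v Yv Vv)) as [Ov _].
    destruct (Hsec v Yv Ov) as [Zbv Ebv].
    exists (beta v). rewrite Ebv. auto.
  - intros z Hz.
    destruct (Hcl _ (closure_in_map alpha Y Z _ V z Ha HZY (fun _ _ Vs => Vs) Hz))
      as [Oaz Uz].
    rewrite (Hret z (proj1 Hz) Oaz) in Uz. exact Uz.
Qed.

Lemma quasi_regular_in_homeo (Y Z : bicyclic -> Prop) (alpha beta : bicyclic -> bicyclic)
    (y0 z0 : bicyclic) :
  continuous alpha -> continuous beta ->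
  (forall z, Z z -> Y (alpha z) /\ beta (alpha z) = z) ->
  (forall y, Y y -> Z (beta y) /\ alpha (beta y) = y) ->
  Y y0 -> beta y0 = z0 -> quasi_regular_in Y y0 <-> quasi_regular_in Z z0.
Proof.
  intros Ha Hb HZ HY Yy0 Ez0. split.
  - apply (quasi_regular_in_transfer Y Z (fun _ => True) alpha beta); auto using open_all.
    + intros z Zz; apply HZ, Zz.
    + intros z Zz _; apply HZ, Zz.
  - apply (quasi_regular_in_transfer Z Y (fun _ => True) beta alpha); auto using open_all.
    + intros y Yy; apply HY, Yy.
    + intros y Yy _; apply HY, Yy.
    + rewrite <- Ez0. apply HY, Yy0.
Qed.

Section Shift.

Hypothesis open_T1 : T1 open.

Variables (Y : bicyclic -> Prop) (x0 : bicyclic) (f g : bicyclic -> bicyclic).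
Hypotheses (f_cont : continuous f) (g_cont : continuous g).
Hypotheses (f_Y : forall y, Y y -> Y (f y)) (g_Y : forall y, Y y -> Y (g y)).
Hypotheses (g_x0 : g x0 = x0) (gK : forall y, Y y -> g (f y) = y).
Hypotheses (fK : forall y, Y y -> y <> x0 -> f (g y) = y).
Hypotheses (f_x0 : f x0 <> x0) (Y_x0 : Y x0).

Lemma quasi_regular_in_shift_separated (N W : bicyclic -> Prop) :
  open N -> open W -> N x0 -> W (f x0) -> (forall z, Y z -> N z -> W z -> False) ->
  quasi_regular_in Y x0 -> quasi_regular_in Y (f x0).
Proof.
  intros HN HW Nx0 Wfx0 Hdisj HQ U HU Ufx0.
  destruct (HQ (fun y => U (f y) /\ W (f y)) (open_and _ _ (f_cont U HU) (f_cont W HW))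
              (conj Ufx0 Wfx0)) as [V [HV [[v [Yv Vv]] Hcl]]].
  exists (fun y => y <> x0 /\ V (g y)).
  split; [exact (open_and _ _ (open_neq open_T1 x0) (g_cont V HV)) | split].
  - exists (f v). split; [auto | split].
    + intro E. apply f_x0.
      assert (Hv : v = x0) by (rewrite <- (gK v Yv), E; exact g_x0).
      rewrite Hv in E. exact E.
    + rewrite (gK v Yv). exact Vv.
  - intros y Hy.
    assert (Hyx0 : y <> x0).
    { intros ->. destruct Hy as [_ Hy].
      destruct (Hy N HN Nx0) as [z [Yz [Nz [Hz Vgz]]]].
      apply (Hdisj z Yz Nz). rewrite <- (fK z Yz Hz).
      apply Hcl, closure_in_self; auto. }
    assert (Hgy : closure_in Y V (g y))
      by (apply (closure_in_map g Y Y (fun y => y <> x0 /\ V (g y))); auto; tauto).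
    destruct (Hcl _ Hgy) as [Ufgy _]. rewrite (fK y (proj1 Hy) Hyx0) in Ufgy. exact Ufgy.
Qed.

Lemma quasi_regular_in_shift : quasi_regular_in Y x0 -> quasi_regular_in Y (f x0).
Proof.
  intros HQ U HU Ufx0.
  assert (Hx0 : U (f (g x0)) /\ x0 <> f x0) by (rewrite g_x0; auto).
  destruct (HQ (fun y => U (f (g y)) /\ y <> f x0)
              (open_and _ _ (continuous_comp f g f_cont g_cont U HU) (open_neq open_T1 (f x0)))
              Hx0) as [V [HV [[v [Yv Vv]] Hcl]]].
  destruct (classic (V x0)) as [Vx0 | nVx0].
  - assert (Hfx0 : ~ closure_in Y V (f x0)) by (intro H; apply Hcl in H; tauto).
    destruct (not_closure_in Y V (f x0) (f_Y x0 Y_x0) Hfx0) as [W [HW [Wfx0 HWV]]].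
    apply (quasi_regular_in_shift_separated V W HV HW Vx0 Wfx0); auto.
    intros z Yz Vz Wz. exact (HWV z Yz Wz Vz).
  - exists V. split; [exact HV | split; [exists v; auto |]].
    intros y Hy. destruct (classic (y = x0)) as [-> | Hne].
    + exfalso.
      assert (H : closure_in Y V (f (g x0))).
      { apply (closure_in_map (fun y => f (g y)) Y Y V V x0); auto using continuous_comp.
        intros s Ys Vs. rewrite fK; auto. intros ->. contradiction. }
      rewrite g_x0 in H. apply Hcl in H. tauto.
    + destruct (Hcl y Hy) as [Ufgy _]. rewrite (fK y (proj1 Hy) Hne) in Ufgy. exact Ufgy.
Qed.

End Shift.

End Subspace.

Definition gen_q : bicyclic := (1, 0).
Definition gen_p : bicyclic := (0, 1).

Lemma bmul_q_left a b : bmul gen_q (a, b) = (S a, b).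
Proof. destruct a; cbn; f_equal; lia. Qed.

Lemma bmul_p_left_S a b : bmul gen_p (S a, b) = (a, b).
Proof. destruct a; cbn; f_equal; lia. Qed.

Lemma bmul_p_left_0 b : bmul gen_p (0, b) = (0, S b).
Proof. reflexivity. Qed.

Lemma bmul_p_right a b : bmul (a, b) gen_p = (a, S b).
Proof. destruct b; cbn; f_equal; lia. Qed.

Lemma bmul_q_right_S a b : bmul (a, S b) gen_q = (a, b).
Proof. destruct b; cbn; f_equal; lia. Qed.

Lemma bmul_q_right_0 a : bmul (a, 0) gen_q = (S a, 0).
Proof. cbn; f_equal; lia. Qed.

Hint Rewrite bmul_q_left bmul_p_left_S bmul_p_left_0 bmul_p_right bmul_q_right_S
  bmul_q_right_0 : bicyclic.

Definition descend (x : bicyclic) : bicyclic := bmul (bmul gen_q x) gen_p.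
Definition ascend (x : bicyclic) : bicyclic := bmul (bmul gen_p x) gen_q.

Lemma updown_iff i j a b : updown (i, j) (a, b) <-> a + j = b + i.
Proof. unfold updown, ble; lia. Qed.

Lemma updown_descend a b : updown (S a, S b) = updown (a, b).
Proof. apply pred_ext. intros [c e]. rewrite !updown_iff. lia. Qed.

Ltac bicyclic_simpl :=
  unfold descend, ascend in *; cbv beta in *; autorewrite with bicyclic in *.

Ltac updown_arith := bicyclic_simpl; rewrite ?updown_iff in *; lia.

Section Bicyclic.

Variable open : (bicyclic -> Prop) -> Prop.
Hypotheses (open_topology : is_topology open) (open_T1 : T1 open)
  (open_semitop : semitopological open).

Lemma continuous_lmul a : continuous open (bmul a).
Proof. intros W HW. exact (proj1 (open_semitop a W HW)). Qed.

Lemma continuous_rmul a : continuous open (fun x => bmul x a).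
Proof. intros W HW. exact (proj2 (open_semitop a W HW)). Qed.

Lemma continuous_descend : continuous open descend.
Proof. exact (continuous_comp open _ _ (continuous_rmul gen_p) (continuous_lmul gen_q)). Qed.

Lemma continuous_ascend : continuous open ascend.
Proof. exact (continuous_comp open _ _ (continuous_rmul gen_q) (continuous_lmul gen_p)). Qed.

Definition quasi_regular_updown (a b : nat) : Prop :=
  quasi_regular_in open (updown (a, b)) (a, b).

(* With truncated subtraction, [(a - b, b - a)] is the greatest element of the
   chain [updown (a, b)]. *)
Lemma quasi_regular_updown_ascend a b :
  quasi_regular_updown (S a) (S b) -> quasi_regular_updown a b.
Proof.
  unfold quasi_regular_updown. rewrite updown_descend.
  apply quasi_regular_in_transfer
    with (O := fun y => y <> (a - b, b - a)) (alpha := descend) (beta := ascend);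
    auto using continuous_descend, continuous_ascend.
  - apply open_neq; assumption.
  - intros [c e] Hz. updown_arith.
  - intros [[|c] [|e]] Hy Htop; try (exfalso; apply Htop; f_equal; updown_arith).
    split; [updown_arith | now bicyclic_simpl].
  - intros [c e] _ _. now bicyclic_simpl.
  - intro E; injection E; lia.
  - now bicyclic_simpl.
Qed.

Lemma quasi_regular_updown_descend_inner a b :
  1 <= a -> 1 <= b -> quasi_regular_updown a b -> quasi_regular_updown (S a) (S b).
Proof.
  intros Ha Hb. unfold quasi_regular_updown. rewrite updown_descend.
  apply quasi_regular_in_transfer
    with (O := fun y => y <> (a - b, b - a)) (alpha := ascend) (beta := descend);
    auto using continuous_descend, continuous_ascend.
  - apply open_neq; assumption.
  - intros [[|c] [|e]] Hz; updown_arith.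
  - intros [c e] Hy _. split; [updown_arith | now bicyclic_simpl].
  - intros [[|c] [|e]] Hz Htop; try (exfalso; apply Htop; bicyclic_simpl; f_equal; updown_arith).
    now bicyclic_simpl.
  - intro E; injection E; lia.
  - now bicyclic_simpl.
Qed.

Lemma quasi_regular_updown_descend_top a b :
  a = 0 \/ b = 0 -> quasi_regular_updown a b -> quasi_regular_updown (S a) (S b).
Proof.
  intro Htop. unfold quasi_regular_updown. rewrite updown_descend.
  replace (S a, S b) with (descend (a, b)) by now bicyclic_simpl.
  apply quasi_regular_in_shift with (g := ascend);
    auto using continuous_descend, continuous_ascend.
  - intros [c e] Hy. updown_arith.
  - intros [[|c] [|e]] Hy; updown_arith.
  - destruct Htop as [-> | ->]; [| destruct a]; now bicyclic_simpl.
  - intros [c e] _. now bicyclic_simpl.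
  - intros [[|c] [|e]] Hy Hne; try (exfalso; apply Hne; f_equal; updown_arith).
    now bicyclic_simpl.
  - bicyclic_simpl. intro E; injection E; lia.
  - rewrite updown_iff; lia.
Qed.

Lemma quasi_regular_updown_succ a b :
  quasi_regular_updown a b <-> quasi_regular_updown (S a) (S b).
Proof.
  split; [| apply quasi_regular_updown_ascend].
  destruct (Nat.eq_dec a 0) as [Ha | Ha]; [apply quasi_regular_updown_descend_top; auto |].
  destruct (Nat.eq_dec b 0) as [Hb | Hb]; [apply quasi_regular_updown_descend_top; auto |].
  apply quasi_regular_updown_descend_inner; lia.
Qed.

Lemma quasi_regular_updown_lmul d :
  quasi_regular_updown d 0 <-> quasi_regular_updown (S d) 0.
Proof.
  apply quasi_regular_in_homeo with (alpha := bmul gen_p) (beta := bmul gen_q);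
    auto using continuous_lmul.
  - intros [[|c] e] Hz; [exfalso; updown_arith |].
    split; [updown_arith | now bicyclic_simpl].
  - intros [c e] Hy. split; [updown_arith | now bicyclic_simpl].
  - rewrite updown_iff; lia.
  - now bicyclic_simpl.
Qed.

Lemma quasi_regular_updown_rmul e :
  quasi_regular_updown 0 e <-> quasi_regular_updown 0 (S e).
Proof.
  apply quasi_regular_in_homeo
    with (alpha := fun x => bmul x gen_q) (beta := fun x => bmul x gen_p);
    auto using continuous_rmul.
  - intros [c [|f]] Hz; [exfalso; updown_arith |].
    split; [updown_arith | now bicyclic_simpl].
  - intros [c f] Hy. split; [updown_arith | now bicyclic_simpl].
  - rewrite updown_iff; lia.
  - now bicyclic_simpl.
Qed.

Lemma quasi_regular_updown_add a b k :
  quasi_regular_updown a b <-> quasi_regular_updown (a + k) (b + k).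
Proof.
  induction k as [| k IHk].
  - rewrite !Nat.add_0_r. reflexivity.
  - rewrite !Nat.add_succ_r, <- quasi_regular_updown_succ. exact IHk.
Qed.

Lemma quasi_regular_updown_lmul_one d :
  quasi_regular_updown d 0 <-> quasi_regular_updown 0 0.
Proof.
  induction d as [| d IHd]; [reflexivity |].
  rewrite <- quasi_regular_updown_lmul. exact IHd.
Qed.

Lemma quasi_regular_updown_rmul_one e :
  quasi_regular_updown 0 e <-> quasi_regular_updown 0 0.
Proof.
  induction e as [| e IHe]; [reflexivity |].
  rewrite <- quasi_regular_updown_rmul. exact IHe.
Qed.

Lemma quasi_regular_updown_one m n :
  quasi_regular_updown m n <-> quasi_regular_updown 0 0.
Proof.
  transitivity (quasi_regular_updown (m - n) (n - m)).
  - rewrite (quasi_regular_updown_add (m - n) (n - m) (Nat.min m n)).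
    replace (m - n + Nat.min m n) with m by lia.
    replace (n - m + Nat.min m n) with n by lia.
    reflexivity.
  - destruct (Nat.le_ge_cases m n).
    + replace (m - n) with 0 by lia. apply quasi_regular_updown_rmul_one.
    + replace (n - m) with 0 by lia. apply quasi_regular_updown_lmul_one.
Qed.

Lemma quasi_regular_at_updown a b :
  quasi_regular_at open (updown (a, b)) (a, b) <-> quasi_regular_updown a b.
Proof. apply quasi_regular_atE. rewrite updown_iff. lia. Qed.

End Bicyclic.

Theorem lemma4 (open : (bicyclic -> Prop) -> Prop) :
  is_topology open -> T1 open -> semitopological open ->
  (exists i j : nat, quasi_regular_at open (updown (i, j)) (i, j)) ->
  forall m n : nat, quasi_regular_at open (updown (m, n)) (m, n).
Proof.
  intros Htop HT1 Hsemi [i [j Hij]] m n.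
  apply quasi_regular_at_updown, (quasi_regular_updown_one open Htop HT1 Hsemi).
  apply (quasi_regular_updown_one open Htop HT1 Hsemi i j).
  apply quasi_regular_at_updown, Hij.
Qed.
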